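(* Let $B\ge 1$, let $\mathcal{A}=\{1,\dots,A\}$ and let $\Phi:\{1,\dots,B\}\to\mathcal{A}$ be a function. Let $\Delta(\varepsilon)$, $\varepsilon\ge 0$, be a family of $B\times B$ stochastic matrices whose entries are analytic functions of $\varepsilon$ at $\varepsilon=0$, and such that for every $\varepsilon>0$, $\Delta(\varepsilon)$ is non-negative and irreducible. For $\varepsilon>0$ let $Y$ be the stationary Markov chain with transition matrix $\Delta(\varepsilon)$ and let $Z=\Phi(Y)$. Then for any fixed $n$ and any fixed sequence $z_{-n}^{0}\in\mathcal{A}^{n+1}$: (1) $p(z_{-n}^{-1})=P(Z_{-n}^{-1}=z_{-n}^{-1})$ is analytic around $\varepsilon=0$; (2) for each $i$ with $-n\le i\le -1$, the vector $p(y_i=\cdot\,|z_{-n}^i):=(P(Y_i=b\mid Z_{-n}^i=z_{-n}^i))_{b=1,\dots,B}$ is analytic around $\varepsilon=0$; (3) $p(z_0|z_{-n}^{-1})=P(Z_0=z_0\mid Z_{-n}^{-1}=z_{-n}^{-1})$ is analytic around $\varepsilon=0$.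
   Context: ''Analytic around $\varepsilon=0$'' means that the function, defined for small $\varepsilon>0$, coincides there with a function given by a convergent power series in $\varepsilon$ in a neighborhood of $0$ (i.e. it extends analytically to $\varepsilon=0$). For $a\in\mathcal{A}$, $\Delta_a$ denotes the $B\times B$ matrix with $\Delta_a(i,j)=\Delta(i,j)$ if $\Phi(j)=a$ and $\Delta_a(i,j)=0$ otherwise; so $p(z_{-n}^{-1})=\pi\Delta_{z_{-n}}\cdots\Delta_{z_{-1}}\mathbf{1}$ with $\pi=\pi(\varepsilon)$ the stationary vector of $\Delta(\varepsilon)$. Conditional probabilities are considered for sequences whose conditioning event has positive probability for small $\varepsilon>0$. *)

From HB Require Import structures.
From mathcomp Require Import all_boot all_order all_algebra.
From mathcomp Require Import all_classical all_reals all_analysis.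
Set Implicit Arguments. Unset Strict Implicit. Unset Printing Implicit Defensive.
Import Order.TTheory GRing.Theory Num.Theory numFieldNormedType.Exports.
Local Open Scope classical_set_scope.
Local Open Scope ring_scope.

Section Defs.
Variable R : realType.

Definition analytic_at0 (f : R -> R) : Prop :=
  exists (a : nat -> R) (r : R), 0 < r /\
    forall e, 0 < e < r ->
      (fun N : nat => \sum_(k < N) a k * e ^+ k) @ \oo --> f e.

Definition analytic_at0_closed (f : R -> R) : Prop :=
  exists (a : nat -> R) (r : R), 0 < r /\
    forall e, 0 <= e < r ->
      (fun N : nat => \sum_(k < N) a k * e ^+ k) @ \oo --> f e.

Variable B : nat.

Definition mpow (M : 'M[R]_B) (k : nat) : 'M[R]_B := iter k (mulmx M) 1%:M.

Definition row_stochastic (M : 'M[R]_B) : Prop :=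
  forall i : 'I_B, \sum_(j < B) M i j = 1.

Definition nonneg_mx (M : 'M[R]_B) : Prop := forall i j : 'I_B, 0 <= M i j.

Definition irreducible_mx (M : 'M[R]_B) : Prop :=
  forall i j : 'I_B, exists k : nat, 0 < mpow M k i j.

Definition stationary_dist (M : 'M[R]_B) (p : 'rV[R]_B) : Prop :=
  (forall j, 0 <= p 0 j) /\ \sum_(j < B) p 0 j = 1 /\ p *m M = p.

(* Finite-dimensional distributions of the stationary Markov chain Y with
   initial (stationary) law p and transition matrix M. *)
Fixpoint trans_prob (M : 'M[R]_B) (x : 'I_B) (ys : seq 'I_B) : R :=
  match ys with
  | [::] => 1
  | y :: ys' => M x y * trans_prob M y ys'
  end.

(* P(Y_t = y_0, ..., Y_{t+m-1} = y_{m-1}) *)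
Definition path_prob (p : 'rV[R]_B) (M : 'M[R]_B) (ys : seq 'I_B) : R :=
  match ys with
  | [::] => 1
  | y :: ys' => p 0 y * trans_prob M y ys'
  end.

Variable A : nat.
Variable Phi : 'I_B -> 'I_A.

(* P(Z_t^{t+m-1} = w) where Z = Phi(Y), m = size w *)
Definition cyl_prob (p : 'rV[R]_B) (M : 'M[R]_B) (w : seq 'I_A) : R :=
  \sum_(y : (size w).-tuple 'I_B | map Phi y == w) path_prob p M y.

(* P(Y_{t+m-1} = b, Z_t^{t+m-1} = w), m = size w *)
Definition joint_last (p : 'rV[R]_B) (M : 'M[R]_B) (w : seq 'I_A) (b : 'I_B) : R :=
  \sum_(y : (size w).-tuple 'I_B | (map Phi y == w) && (last b y == b))
     path_prob p M y.

(* P(Y_{t+m-1} = b | Z_t^{t+m-1} = w) *)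
Definition cond_state p M w b : R := joint_last p M w b / cyl_prob p M w.

(* P(Z_{t+m} = a | Z_t^{t+m-1} = w) *)
Definition cond_next p M w (a : 'I_A) : R :=
  cyl_prob p M (rcons w a) / cyl_prob p M w.

End Defs.

From HB Require Import structures.
From mathcomp Require Import all_boot all_order all_algebra.
From mathcomp Require Import all_classical all_reals all_analysis.
From mathcomp Require Import ring lra zify.
Import Order.TTheory GRing.Theory Num.Theory numFieldNormedType.Exports.
Set Implicit Arguments. Unset Strict Implicit. Unset Printing Implicit Defensive.
Local Open Scope classical_set_scope.
Local Open Scope ring_scope.

(* The entries of [Delta] are power series in [e], and functions given near
   [0+] by power series with geometrically bounded coefficients are closed under
   sums, products and bounded quotients: if [h = f / g] stays bounded, the order
   of vanishing of [g] at [0] is at most that of [f], and once this power of [e]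
   is divided out the series of [g] is invertible.  For [e > 0], Cramer's rule
   gives [pi_j = (sum_i adj Q i j) / det Q] with [Q = 1 - Delta + J]; [det Q] is
   nonzero because irreducible stochastic matrices have only constant harmonic
   vectors, and [0 <= pi_j <= 1] bounds the quotient.  Cylinder probabilities are
   polynomials in [pi] and [Delta], and the conditional probabilities are
   quotients of them bounded by [1]. *)

Section PowerSeries.
Variable R : realType.
Implicit Types (a b : nat -> R) (f g h : R -> R).

Definition near0 (P : R -> Prop) := exists d : R, 0 < d /\ forall e, 0 < e < d -> P e.

Lemma near0_mono (P Q : R -> Prop) : (forall e, 0 < e -> P e -> Q e) -> near0 P -> near0 Q.
Proof. by move=> PQ [d [d0 Pd]]; exists d; split=> // e /[dup] /andP[e0 _] /Pd /PQ; apply. Qed.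

Lemma near0_and (P Q : R -> Prop) : near0 P -> near0 Q -> near0 (fun e => P e /\ Q e).
Proof.
move=> [d1 [d10 P1]] [d2 [d20 Q2]]; exists (Num.min d1 d2); split; first by rewrite lt_min d10.
by move=> e /andP[e0]; rewrite lt_min => /andP[ed1 ed2]; split; [apply: P1 | apply: Q2];
  rewrite e0.
Qed.

Lemma near0_lt (d : R) : 0 < d -> near0 (fun e => e < d).
Proof. by move=> d0; exists d; split=> // e /andP[]. Qed.

Lemma near0_ex (P : R -> Prop) : near0 P -> exists e, 0 < e /\ P e.
Proof.
move=> [d [d0 Pd]]; exists (d / 2); split; first by rewrite divr_gt0.
by apply: Pd; rewrite divr_gt0 //= ltr_pdivrMr // ltr_pMr // ltr1n.
Qed.

Definition psum a (e : R) (N : nat) : R := \sum_(k < N) a k * e ^+ k.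

Definition coef_bound a (C L : R) := forall k, `|a k| <= C * L ^+ k.

(* The geometric coefficient bound is kept explicit: it is what makes the
   estimates for products and inverses of power series work. *)
Definition pseries a f := exists C L : R, 0 < L /\ coef_bound a C L /\
  near0 (fun e => psum a e @ \oo --> f e).

Definition analytic0 f := exists a, pseries a f.

Lemma coef_bound_ge0 a C L : coef_bound a C L -> 0 <= C.
Proof. by move=> /(_ 0%N); rewrite expr0 mulr1; apply: le_trans. Qed.

Lemma coef_bound_le a C L C' L' :
  coef_bound a C L -> C <= C' -> 0 <= L <= L' -> coef_bound a C' L'.
Proof.
move=> aCL CC' /andP[L0 LL'] k; apply: (le_trans (aCL k)).
by apply: ler_pM; rewrite ?(coef_bound_ge0 aCL) ?exprn_ge0 ?lerXn2r ?nnegrE ?(le_trans L0).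
Qed.

Lemma coef_bound_term a C L e k : coef_bound a C L -> 0 <= e ->
  `|a k * e ^+ k| <= C * (L * e) ^+ k.
Proof.
move=> aCL e0; rewrite normrM normrX (ger0_norm e0) exprMn mulrA.
by apply: ler_wpM2r; rewrite ?exprn_ge0.
Qed.

Lemma geometric_sum_le2 (q : R) N : 0 < q <= 2^-1 -> \sum_(k < N) q ^+ k <= 2.
Proof.
move=> /andP[q0 q2]; have q1 : `|q| < 1.
  by rewrite gtr0_norm // (le_lt_trans q2) // invf_lt1 ?ltr1n.
have -> : \sum_(k < N) q ^+ k = series (geometric 1 q) N.
  by rewrite /series /= big_mkord; apply: eq_bigr => k _; rewrite mul1r.
apply: (le_trans (geometric_le_lim N ler01 q0 q1)).
rewrite mul1r -[2]invrK lef_pV2 ?posrE ?subr_gt0 ?(ltr_normlW q1) //.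
by rewrite [X in _ <= X - _](splitr 1) mul1r; lra.
Qed.

Lemma near0_mul_quarter (L : R) : 0 < L -> near0 (fun e => 0 < L * e <= 4^-1).
Proof.
move=> L0; exists (4 * L)^-1; split=> [|e /andP[e0 eL]]; first by rewrite invr_gt0 mulr_gt0.
rewrite mulr_gt0 //=; apply: (le_trans (ler_wpM2l (ltW L0) (ltW eL))).
by rewrite invfM mulrCA mulfV ?gt_eqF // mulr1.
Qed.

Lemma inv4_le_half : (4^-1 : R) <= 2^-1.
Proof. by rewrite lef_pV2 ?posrE // ler_nat. Qed.

Lemma psum_sub_head_le a C L e N : coef_bound a C L -> 0 < L * e <= 2^-1 -> 0 <= e ->
  `|psum a e N.+1 - a 0%N| <= 2 * C * (L * e).
Proof.
move=> aCL Le e0; rewrite /psum big_ord_recl expr0 mulr1 addrAC subrr add0r.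
apply: (le_trans (ler_norm_sum _ _ _)).
apply: (@le_trans _ _ (\sum_(i < N) C * (L * e) * (L * e) ^+ i)).
  apply: ler_sum => i _; apply: (le_trans (coef_bound_term _ aCL e0)).
  by rewrite exprS mulrA.
have C0 := coef_bound_ge0 aCL; have sum_le2 := geometric_sum_le2 N Le.
have : 0 <= C * (L * e) by rewrite mulr_ge0 // ltW //; case/andP: Le.
rewrite -mulr_sumr; nra.
Qed.

Lemma psum_series a e : psum a e = series (fun k => a k * e ^+ k).
Proof. by apply/funext => n; rewrite /psum /series /= big_mkord. Qed.

Lemma psum_cvg a C L e : coef_bound a C L -> 0 <= e -> 0 <= L -> L * e < 1 ->
  cvgn (psum a e).
Proof.
move=> aCL e0 L0 Le; rewrite psum_series; apply: normed_cvg.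
apply: (@series_le_cvg _ _ (geometric C (L * e))) => //.
- by move=> n /=.
- by move=> n /=; rewrite mulr_ge0 ?(coef_bound_ge0 aCL) ?exprn_ge0 ?mulr_ge0.
- by move=> n /=; apply: coef_bound_term.
- by apply: is_cvg_geometric_series; rewrite ger0_norm ?mulr_ge0.
Qed.

Lemma cvgn_unique (u : nat -> R) (l1 l2 : R) : u @ \oo --> l1 -> u @ \oo --> l2 -> l1 = l2.
Proof. exact: cvg_unique. Qed.

Lemma cvg_eventually_cst (u : nat -> R) K (v : R) : (forall n, u (n + K)%N = v) ->
  u @ \oo --> v.
Proof. by move=> uv; apply: cvg_near_cst; exists K => // n /= /subnK <-; apply: uv. Qed.

Lemma pseries_near_head a f : pseries a f ->
  exists W, near0 (fun e => `|f e - a 0%N| <= W * e).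
Proof.
move=> [C [L [L0 [aCL af]]]]; exists (2 * C * L).
apply: near0_mono (near0_and af (near0_mul_quarter L0)) => e e0 [afe /andP[Le0 Le4]].
have Le : 0 < L * e <= 2^-1 by rewrite Le0 (le_trans Le4 inv4_le_half).
have h : (fun N => `|psum a e (N + 1) - a 0%N|) @ \oo --> `|f e - a 0%N|.
  apply: cvg_norm; apply: cvgB; last exact: cvg_cst.
  by move: afe; rewrite -(cvg_shiftn 1).
apply: (ler_cvg_to h (cvg_cst _)); apply: nearW => N.
by rewrite addn1 -mulrA; apply: psum_sub_head_le (ltW e0).
Qed.

Lemma pseries_eq_near a f h : pseries a f -> near0 (fun e => f e = h e) -> pseries a h.
Proof.
move=> [C [L [L0 [aCL af]]]] fh; exists C, L; do 2!split=> //.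
by apply: near0_mono (near0_and af fh) => e _ [afe <-].
Qed.

Lemma pseries_zero a f : pseries a f -> (forall k, a k = 0) -> near0 (fun e => f e = 0).
Proof.
move=> [C [L [_ [_ af]]]] a0; apply: near0_mono af => e _ afe.
apply: (cvgn_unique afe); apply: (@cvg_eventually_cst _ 0%N) => n.
by rewrite /psum big1 // => k _; rewrite a0 mul0r.
Qed.

Lemma pseries_monomial (v : R) j :
  pseries (fun k => if k == j then v else 0) (fun e => v * e ^+ j).
Proof.
exists `|v|, 1; do 2!split => //.
  by move=> k; rewrite expr1n mulr1; case: eqP; rewrite ?normr0.
exists 1; split=> // e _; apply: (@cvg_eventually_cst _ j.+1) => n.
have jn : (j < n + j.+1)%N by rewrite addnS ltnS leq_addl.
rewrite /psum (bigD1 (Ordinal jn)) //= eqxx big1 ?addr0 // => k.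
by rewrite -val_eqE /= => /negbTE ->; rewrite mul0r.
Qed.

Lemma pseries_add a b f g : pseries a f -> pseries b g ->
  pseries (fun k => a k + b k) (fun e => f e + g e).
Proof.
move=> [C1 [L1 [L10 [aCL1 af]]]] [C2 [L2 [L20 [bCL2 bg]]]].
have C10 := coef_bound_ge0 aCL1; have C20 := coef_bound_ge0 bCL2.
exists (C1 + C2), (Num.max L1 L2); split; first by rewrite lt_max L10.
split.
  have L1m : 0 <= L1 <= Num.max L1 L2 by rewrite (ltW L10) le_max lexx.
  have L2m : 0 <= L2 <= Num.max L1 L2 by rewrite (ltW L20) le_max lexx orbT.
  move=> k; apply: (le_trans (ler_normD _ _)); rewrite mulrDl.
  by apply: lerD; [apply: (coef_bound_le aCL1) | apply: (coef_bound_le bCL2)];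
    rewrite ?lerDl ?lerDr.
apply: near0_mono (near0_and af bg) => e _ [afe bge].
have -> : psum (fun k => a k + b k) e = psum a e + psum b e.
  apply/funext => N; rewrite -[RHS]/(psum a e N + psum b e N) /psum -big_split /=.
  by apply: eq_bigr => k _; rewrite mulrDl.
exact: cvgD afe bge.
Qed.

Definition cauchy a b (n : nat) : R := \sum_(i < n.+1) a i * b (n - i)%N.

Lemma sum_antidiagonal (F : nat -> nat -> R) N :
  \sum_(n < N) \sum_(i < n.+1) F i (n - i)%N =
  \sum_(i < N) \sum_(j < N | (i + j < N)%N) F i j.
Proof.
transitivity (\sum_(n < N) \sum_(i < N) (if (i <= n)%N then F i (n - i)%N else 0)).
  apply: eq_bigr => n _.
  by rewrite (big_ord_widen _ (fun i => F i (n - i)%N) (ltn_ord n)) big_mkcond.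
rewrite exchange_big /=; apply: eq_bigr => i _; rewrite [RHS]big_mkcond /=.
rewrite -(big_mkord xpredT (fun n => if (i <= n)%N then F i (n - i)%N else 0)).
rewrite -(big_mkord xpredT (fun j => if (i + j < N)%N then F i j else 0)).
rewrite (@big_cat_nat _ _ _ i 0 N _ _ (leq0n i) (ltnW (ltn_ord i))) /= big_nat_cond big1 ?add0r;
  last by move=> n /andP[/andP[_]]; rewrite ltnNge => /negbTE ->.
rewrite (@big_cat_nat _ _ _ (N - i) 0 N _ _ (leq0n (N - i)) (leq_subr i N)) /=.
rewrite [X in _ = _ + X]big_nat_cond [X in _ = _ + X]big1 ?addr0; last first.
  by move=> j /andP[/andP[ij _] _]; have -> : (i + j < N)%N = false by lia.
rewrite -{1}(add0n i) big_addn big_nat_cond [RHS]big_nat_cond.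
apply: eq_bigr => j /andP[/andP[_ jN] _].
by rewrite leq_addl addnK; have -> : (i + j < N)%N by lia.
Qed.

Lemma psum_mul a b e N : psum a e N * psum b e N = psum (cauchy a b) e N +
  \sum_(i < N) \sum_(j < N | ~~ (i + j < N)%N) a i * b j * e ^+ (i + j).
Proof.
have -> : psum (cauchy a b) e N =
    \sum_(i < N) \sum_(j < N | (i + j < N)%N) a i * b j * e ^+ (i + j).
  rewrite /psum /cauchy -(sum_antidiagonal (fun i j => a i * b j * e ^+ (i + j))).
  apply: eq_bigr => n _; rewrite mulr_suml; apply: eq_bigr => i _.
  by rewrite subnKC // -ltnS.
rewrite -big_split /= /psum big_distrlr /=; apply: eq_bigr => i _.
rewrite (bigID (fun j : 'I_N => (i + j < N)%N)) /=.
by congr (_ + _); apply: eq_bigr => j _; rewrite exprD; ring.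
Qed.

Lemma quarter_pow_le (q : R) i j N : 0 <= q <= 4^-1 -> (N <= i + j)%N ->
  q ^+ i * q ^+ j <= 2^-1 ^+ N * (2^-1 ^+ i * 2^-1 ^+ j).
Proof.
move=> /andP[q0 q4] Nij; have h0 : (0 : R) <= 2^-1 by rewrite invr_ge0.
rewrite -!exprD; apply: (@le_trans _ _ (2^-1 ^+ (i + j) * 2^-1 ^+ (i + j))).
  by rewrite -exprMn -invfM -natrM lerXn2r ?nnegrE ?mulr_ge0.
rewrite [X in _ <= X]exprD; apply: ler_wpM2r; first exact: exprn_ge0.
by apply: ler_wiXn2l => //; rewrite invf_le1 ?ler1n.
Qed.

Lemma cauchy_err_le a b C1 C2 L e N : coef_bound a C1 L -> coef_bound b C2 L ->
  0 <= e -> 0 <= L * e <= 4^-1 ->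
  `|\sum_(i < N) \sum_(j < N | ~~ (i + j < N)%N) a i * b j * e ^+ (i + j)|
    <= 4 * (C1 * C2) * 2^-1 ^+ N.
Proof.
move=> aCL bCL e0 Le; have C12 : 0 <= C1 * C2.
  by rewrite mulr_ge0 ?(coef_bound_ge0 aCL) ?(coef_bound_ge0 bCL).
apply: (le_trans (ler_norm_sum _ _ _)).
apply: (@le_trans _ _ (\sum_(i < N) \sum_(j < N)
    C1 * C2 * 2^-1 ^+ N * (2^-1 ^+ i * 2^-1 ^+ j))).
  apply: ler_sum => i _; apply: (le_trans (ler_norm_sum _ _ _)).
  rewrite big_mkcond; apply: ler_sum => j _; case: ifP => [|_]; last first.
    by rewrite -mulrA; apply: mulr_ge0 => //; rewrite !mulr_ge0 ?exprn_ge0.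
  rewrite -leqNgt => Nij; rewrite exprD mulrACA normrM.
  apply: (le_trans (ler_pM _ _ (coef_bound_term i aCL e0) (coef_bound_term j bCL e0))) => //.
  by rewrite mulrACA -[X in _ <= X]mulrA ler_wpM2l // quarter_pow_le.
under eq_bigr do rewrite -mulr_sumr.
rewrite -mulr_sumr -big_distrlr /=.
have h : 0 < (2^-1 : R) <= 2^-1 by rewrite lexx invr_gt0 ltr0n.
have S2 := geometric_sum_le2 N h.
have S0 : 0 <= \sum_(i < N) (2^-1 : R) ^+ i by rewrite sumr_ge0 // => i _; rewrite exprn_ge0.
have SS : (\sum_(i < N) (2^-1 : R) ^+ i) * (\sum_(i < N) 2^-1 ^+ i) <= 4 by nra.
have : 0 <= C1 * C2 * 2^-1 ^+ N by rewrite mulr_ge0 ?exprn_ge0.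
nra.
Qed.

Lemma coef_bound_cauchy a b C1 C2 L : coef_bound a C1 L -> coef_bound b C2 L -> 0 <= L ->
  coef_bound (cauchy a b) (C1 * C2) (2 * L).
Proof.
move=> aCL bCL L0 n; apply: (le_trans (ler_norm_sum _ _ _)).
apply: (@le_trans _ _ (\sum_(i < n.+1) C1 * C2 * L ^+ n)).
  apply: ler_sum => i _; rewrite normrM.
  apply: (le_trans (ler_pM (normr_ge0 _) (normr_ge0 _) (aCL i) (bCL (n - i)%N))).
  by rewrite mulrACA -exprD subnKC // -ltnS.
rewrite sumr_const card_ord -[_ *+ n.+1]mulr_natr exprMn.
have n2 : (n.+1%:R : R) <= 2 ^+ n by rewrite -natrX ler_nat ltn_expl.
have : 0 <= C1 * C2 * L ^+ n.
  by rewrite !mulr_ge0 ?(coef_bound_ge0 aCL) ?(coef_bound_ge0 bCL) ?exprn_ge0.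
nra.
Qed.

Lemma pseries_mul a b f g : pseries a f -> pseries b g ->
  pseries (cauchy a b) (fun e => f e * g e).
Proof.
move=> [C1 [L1 [L10 [aCL1 af]]]] [C2 [L2 [L20 [bCL2 bg]]]].
set L := Num.max L1 L2; have L0 : 0 < L by rewrite lt_max L10.
have aCL : coef_bound a C1 L.
  by apply: (coef_bound_le aCL1); rewrite ?lexx // (ltW L10) le_max lexx.
have bCL : coef_bound b C2 L.
  by apply: (coef_bound_le bCL2); rewrite ?lexx // (ltW L20) le_max lexx orbT.
exists (C1 * C2), (2 * L); split; first by rewrite mulr_gt0.
split; first exact: coef_bound_cauchy (ltW L0).
apply: near0_mono (near0_and (near0_and af bg) (near0_mul_quarter L0)).
move=> e e0 [[afe bge] /andP[/ltW Le0 Le4]].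
have Le : 0 <= L * e <= 4^-1 by rewrite Le0.
set err := fun N => \sum_(i < N) \sum_(j < N | ~~ (i + j < N)%N) a i * b j * e ^+ (i + j).
have -> : psum (cauchy a b) e = (fun N => psum a e N * psum b e N - err N).
  by apply/funext => N; rewrite psum_mul addrK.
have err0 : err @ \oo --> 0.
  set G := geometric (4 * (C1 * C2)) 2^-1.
  have G0 : G @ \oo --> (0 : R).
    by apply: cvg_geometric; rewrite gtr0_norm ?invr_gt0 // invf_lt1 ?ltr1n.
  apply: (@squeeze_cvgr _ _ _ _ (fun N => - G N) G); last exact: G0.
    by apply: nearW => N; rewrite -ler_norml; apply: cauchy_err_le aCL bCL (ltW e0) Le.
  by rewrite -oppr0; apply: cvgN.
by rewrite -[f e * g e]subr0; apply: cvgB (cvgM afe bge) err0.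
Qed.

Lemma pseries_shift a f m : pseries a f -> (forall k, (k < m)%N -> a k = 0) ->
  pseries (fun k => a (k + m)%N) (fun e => f e / e ^+ m).
Proof.
move=> [C [L [L0 [aCL af]]]] am; exists (C * L ^+ m), L; split => //; split.
  by move=> k; rewrite -mulrA -exprD addnC; apply: aCL.
apply: near0_mono af => e e0 afe.
have shift N : psum a e (N + m) = e ^+ m * psum (fun k => a (k + m)%N) e N.
  rewrite /psum addnC big_split_ord /= big1 ?add0r; last by move=> i _; rewrite am ?mul0r.
  by rewrite mulr_sumr; apply: eq_bigr => i _ /=; rewrite exprD addnC; ring.
have -> : psum (fun k => a (k + m)%N) e = (fun N => (e ^+ m)^-1 * psum a e (N + m)).
  by apply/funext => N; rewrite shift mulKf // expf_neq0 // gt_eqF.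
by rewrite [f e / _]mulrC; apply: cvgM (cvg_cst _) _; rewrite (cvg_shiftn m).
Qed.

Section Reciprocal.
Variable a : nat -> R.

(* [inv_coefs n] lists the first [n.+1] coefficients of the reciprocal series;
   going through the list makes the course-of-values recursion structural. *)
Fixpoint inv_coefs (n : nat) : seq R :=
  if n is n'.+1 then
    rcons (inv_coefs n')
      (- (a 0%N)^-1 * \sum_(k < n'.+1) a k.+1 * nth 0 (inv_coefs n') (n' - k))
  else [:: (a 0%N)^-1].

Definition inv_coef n := nth 0 (inv_coefs n) n.

Lemma size_inv_coefs n : size (inv_coefs n) = n.+1.
Proof. by elim: n => [|n IH] //=; rewrite size_rcons IH. Qed.

Lemma nth_inv_coefs n i : (i <= n)%N -> nth 0 (inv_coefs n) i = inv_coef i.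
Proof.
elim: n => [|n IH]; first by rewrite leqn0 => /eqP->.
rewrite leq_eqVlt => /orP[/eqP->//|]; rewrite ltnS => hi.
by rewrite /= nth_rcons size_inv_coefs ltnS hi IH.
Qed.

Lemma inv_coef0 : inv_coef 0 = (a 0%N)^-1.
Proof. by []. Qed.

Lemma inv_coefS n :
  inv_coef n.+1 = - (a 0%N)^-1 * \sum_(k < n.+1) a k.+1 * inv_coef (n - k).
Proof.
rewrite /inv_coef /= nth_rcons size_inv_coefs ltnn eqxx; congr (_ * _).
by apply: eq_bigr => k _; rewrite nth_inv_coefs // leq_subr.
Qed.

Lemma cauchy_inv_coef n : a 0%N != 0 -> cauchy a inv_coef n = (n == 0)%:R.
Proof.
move=> a0; case: n => [|n]; first by rewrite /cauchy big_ord1 inv_coef0 mulfV.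
rewrite /cauchy big_ord_recl subn0 inv_coefS mulrA mulrN mulfV // mulN1r.
by rewrite [X in _ + X](eq_bigr (fun k : 'I_n.+1 => a k.+1 * inv_coef (n - k))) ?addNr.
Qed.

Lemma coef_bound_inv C L t M : coef_bound a C L -> 0 < t <= 2^-1 ->
  2 * C * `|a 0%N|^-1 * t <= 1 -> 0 <= M -> L = t * M ->
  coef_bound inv_coef `|a 0%N|^-1 M.
Proof.
set D := `|a 0%N|^-1 => aCL /andP[t0 t2] CDt M0 LtM.
have C0 := coef_bound_ge0 aCL; have D0 : 0 <= D by rewrite invr_ge0.
elim/ltn_ind => -[_|n IH]; first by rewrite inv_coef0 expr0 mulr1 normfV.
rewrite inv_coefS normrM normrN normfV ler_wpM2l //.
apply: (le_trans (ler_norm_sum _ _ _)).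
apply: (@le_trans _ _ (\sum_(k < n.+1) C * L ^+ k.+1 * (D * M ^+ (n - k)))).
  apply: ler_sum => k _; rewrite normrM; apply: ler_pM => //.
  by apply: IH; rewrite ltnS leq_subr.
rewrite (eq_bigr (fun k : 'I_n.+1 => C * D * t * M ^+ n.+1 * t ^+ k)); last first.
  move=> k _; have Mk : M ^+ k.+1 * M ^+ (n - k) = M ^+ n.+1.
    by rewrite -exprD addSn subnKC // -ltnS.
  by rewrite LtM exprMn -Mk exprS; ring.
rewrite -mulr_sumr; have S2 := geometric_sum_le2 n.+1 (andb_true_intro (conj t0 t2)).
have : 0 <= C * D * t * M ^+ n.+1 by rewrite !mulr_ge0 ?exprn_ge0 ?(ltW t0).
have : 0 <= M ^+ n.+1 by rewrite exprn_ge0.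
nra.
Qed.

End Reciprocal.

Lemma pseries_inv a f : pseries a f -> a 0%N != 0 ->
  pseries (inv_coef a) (fun e => (f e)^-1).
Proof.
move=> af a0; have [C [L [L0 [aCL _]]]] := af.
set D := `|a 0%N|^-1; set t := (2 * C * D + 2)^-1; set M := L / t.
have C0 := coef_bound_ge0 aCL; have D0 : 0 <= D by rewrite invr_ge0.
have CD0 : 0 <= 2 * C * D by rewrite !mulr_ge0.
have t0 : 0 < t by rewrite invr_gt0 ltr_wpDl.
have M0 : 0 < M by rewrite divr_gt0.
have icb : coef_bound (inv_coef a) D M.
  apply: (@coef_bound_inv _ C L t M aCL) (ltW M0) _.
  - by rewrite t0 lef_pV2 ?posrE ?ltr_wpDl // lerDr.
  - by rewrite ler_pdivrMr ?ltr_wpDl // mul1r lerDl.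
  - by rewrite mulrC divfK // gt_eqF.
(* [u] sums the reciprocal series; it is [1 / f] because [cauchy a (inv_coef a)]
   is the series of [1]. *)
pose u e := lim (psum (inv_coef a) e @ \oo).
have iu : pseries (inv_coef a) u.
  exists D, M; do 2!split=> //.
  apply: near0_mono (near0_mul_quarter M0) => e e0 /andP[_ Me].
  apply: cvg_toP => //; apply: psum_cvg icb (ltW e0) (ltW M0) _.
  by rewrite (le_lt_trans Me) // invf_lt1 ?ltr1n.
apply: (pseries_eq_near iu); have [_ [_ [_ [_ afu]]]] := pseries_mul af iu.
apply: near0_mono afu => e _ afue; apply/esym/mulr1_eq.
apply: (cvgn_unique afue); apply: (@cvg_eventually_cst _ 1%N) => n.
rewrite addn1 /psum big_ord_recl cauchy_inv_coef // mulr1 big1 ?addr0 // => k _.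
by rewrite cauchy_inv_coef // mul0r.
Qed.

Lemma analytic0_eq_near f h : analytic0 f -> near0 (fun e => f e = h e) -> analytic0 h.
Proof. by move=> [a af] fh; exists a; apply: pseries_eq_near af fh. Qed.

Lemma analytic0_cst (v : R) : analytic0 (fun _ => v).
Proof.
exists (fun k => if k == 0%N then v else 0); apply: pseries_eq_near (pseries_monomial v 0) _.
by exists 1; split=> // e _; rewrite mulr1.
Qed.

Lemma analytic0_exp j : analytic0 (fun e => e ^+ j).
Proof.
exists (fun k => if k == j then 1 else 0); apply: pseries_eq_near (pseries_monomial 1 j) _.
by exists 1; split=> // e _; rewrite mul1r.
Qed.

Lemma analytic0_add f g : analytic0 f -> analytic0 g -> analytic0 (fun e => f e + g e).
Proof. by move=> [a af] [b bg]; eexists; apply: pseries_add af bg. Qed.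

Lemma analytic0_mul f g : analytic0 f -> analytic0 g -> analytic0 (fun e => f e * g e).
Proof. by move=> [a af] [b bg]; eexists; apply: pseries_mul af bg. Qed.

Lemma analytic0_opp f : analytic0 f -> analytic0 (fun e => - f e).
Proof.
move=> af; apply: analytic0_eq_near (analytic0_mul (analytic0_cst (-1)) af) _.
by exists 1; split=> // e _; rewrite mulN1r.
Qed.

Lemma analytic0_sum (I : Type) (r : seq I) (P : pred I) (F : I -> R -> R) :
  (forall i, analytic0 (F i)) -> analytic0 (fun e => \sum_(i <- r | P i) F i e).
Proof.
move=> FA; elim: r => [|i r IH].
  by under eq_fun do rewrite big_nil; apply: analytic0_cst.
under eq_fun do rewrite big_cons.
by case: (P i) => //; apply: analytic0_add.
Qed.

Lemma analytic0_prod (I : Type) (r : seq I) (P : pred I) (F : I -> R -> R) :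
  (forall i, analytic0 (F i)) -> analytic0 (fun e => \prod_(i <- r | P i) F i e).
Proof.
move=> FA; elim: r => [|i r IH].
  by under eq_fun do rewrite big_nil; apply: analytic0_cst.
under eq_fun do rewrite big_cons.
by case: (P i) => //; apply: analytic0_mul.
Qed.

Lemma analytic0_det n (M : R -> 'M[R]_n) : (forall i j, analytic0 (fun e => M e i j)) ->
  analytic0 (fun e => \det (M e)).
Proof.
move=> MA; apply: analytic0_sum => s; apply: analytic0_mul; first exact: analytic0_cst.
by apply: analytic0_prod => i; apply: MA.
Qed.

Lemma analytic0_adj n (M : R -> 'M[R]_n) : (forall i j, analytic0 (fun e => M e i j)) ->
  forall i j, analytic0 (fun e => \adj (M e) i j).
Proof.
move=> MA i j; under eq_fun do rewrite mxE /cofactor.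
apply: analytic0_mul; first exact: analytic0_cst.
by apply: analytic0_det => k l; under eq_fun do rewrite !mxE; apply: MA.
Qed.

Lemma le0_near0 (c W : R) : near0 (fun e => c <= W * e) -> c <= 0.
Proof.
move=> cW; rewrite leNgt; apply/negP => c0.
have W1 : 0 < `|W| + 1 by rewrite ltr_wpDl.
have [e [e0 [ceW ec]]] := near0_ex (near0_and cW (near0_lt (divr_gt0 c0 W1))).
have : W * e <= `|W| * e by rewrite ler_wpM2r ?ler_norm ?ltW.
have : e * (`|W| + 1) < c by rewrite -ltr_pdivlMr.
nra.
Qed.

Lemma ex_first_nonzero (b : nat -> R) : ~ (forall k, b k = 0) ->
  exists m, b m != 0 /\ forall k, (k < m)%N -> b k = 0.
Proof.
move=> /existsNP b0; have ex : exists k, b k != 0 by have [k /eqP] := b0; exists k.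
case: (ex_minnP ex) => m bm mmin; exists m; split => // k km.
by apply/eqP; apply: contraTT km => bk; rewrite -leqNgt; apply: mmin.
Qed.

Lemma pseries_order_le a b f g h K m m' : pseries a f -> pseries b g ->
  (forall k, (k < m')%N -> a k = 0) -> a m' != 0 -> (forall k, (k < m)%N -> b k = 0) ->
  near0 (fun e => `|h e| <= K /\ h e * g e = f e) -> (m <= m')%N.
Proof.
move=> af bg am' am'0 bm hfg; rewrite leqNgt; apply/negP => m'm.
have [W1 F1] := pseries_near_head (pseries_shift af am').
have [W2 G2] := pseries_near_head (pseries_shift bg bm).
rewrite /= add0n in F1 G2.
suff : `|a m'| <= 0 by rewrite normr_le0 (negbTE am'0).
apply: (@le0_near0 _ (K * (`|b m| + `|W2|) + `|W1|)).
apply: near0_mono (near0_and (near0_and F1 G2) (near0_and hfg (near0_lt ltr01))).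
move=> e e0 [[F1e G2e] [[hK hfge] e1]].
set F := f e / e ^+ m' in F1e; set G := g e / e ^+ m in G2e.
have en : e != 0 by rewrite gt_eqF.
have FG : F = h e * e ^+ (m - m') * G.
  rewrite /F /G -hfge -[in e ^+ m](subnK (ltnW m'm)) exprD.
  by field; rewrite !expf_neq0.
have Gb : `|G| <= `|b m| + `|W2|.
  have W2e : W2 * e <= `|W2|.
    by rewrite (le_trans (ler_norm _)) // normrM (gtr0_norm e0) ler_piMr // ltW.
  have := ler_normD (G - b m) (b m); rewrite subrK; lra.
have Fb : `|F| <= K * e * (`|b m| + `|W2|).
  rewrite FG normrM (normrM (h e)) (ger0_norm (exprn_ge0 _ (ltW e0))).
  apply: ler_pM; rewrite ?mulr_ge0 ?exprn_ge0 ?(ltW e0) //.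
  apply: ler_pM => //; first exact: exprn_ge0 (ltW e0).
  have m1 : (1 <= m - m')%N by rewrite subn_gt0.
  by have := ler_wiXn2l (ltW e0) (ltW e1) m1; rewrite expr1.
have W1e : W1 * e <= `|W1| * e by rewrite ler_wpM2r ?ler_norm ?ltW.
have := ler_normD (a m' - F) F; rewrite subrK distrC; lra.
Qed.

Lemma analytic0_div f g h K : analytic0 f -> analytic0 g ->
  near0 (fun e => g e != 0 /\ `|h e| <= K /\ h e * g e = f e) -> analytic0 h.
Proof.
move=> [a af] [b bg] hfg.
have [bz|/ex_first_nonzero[m [bm0 bm]]] := pselect (forall k, b k = 0).
  have [e [_ [[/eqP g0 _] /g0]]] := near0_ex (near0_and hfg (pseries_zero bg bz)).
  by [].
have [az|/ex_first_nonzero[m' [am'0 am']]] := pselect (forall k, a k = 0).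
  apply: analytic0_eq_near (analytic0_cst 0) _.
  apply: near0_mono (near0_and hfg (pseries_zero af az)) => e _ [[g0 [_ hgf]] f0].
  by move: hgf; rewrite f0 => /eqP; rewrite mulf_eq0 (negbTE g0) orbF => /eqP.
have mm' : (m <= m')%N.
  apply: (@pseries_order_le a b f g h K m m' af bg am' am'0 bm).
  by apply: near0_mono hfg => e _ [_ hf].
have Fa : analytic0 (fun e => f e / e ^+ m') by eexists; apply: pseries_shift af am'.
have Ga : analytic0 (fun e => (g e / e ^+ m)^-1).
  by eexists; apply: pseries_inv (pseries_shift bg bm) _; rewrite add0n.
apply: analytic0_eq_near (analytic0_mul (analytic0_mul (analytic0_exp (m' - m)) Fa) Ga) _.
apply: near0_mono hfg => e e0 [g0 [_ <-]].
have en : e != 0 by rewrite gt_eqF.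
by rewrite -[in e ^+ m'](subnK mm') exprD; field; rewrite g0 !expf_neq0.
Qed.

Lemma analytic0_of_closed (f : R -> R) : analytic_at0_closed f -> analytic0 f.
Proof.
move=> [a [r [r0 af]]]; set e0 := r / 2.
have e00 : 0 < e0 by rewrite divr_gt0.
have e0r : e0 < r by rewrite ltr_pdivrMr // ltr_pMr // ltr1n.
have : cvgn (series (fun k => a k * e0 ^+ k)).
  by rewrite -psum_series; apply: cvgP (af e0 _); rewrite (ltW e00).
move=> /cvg_series_bounded [K0 [_ /(_ (`|K0| + 1))]].
rewrite (le_lt_trans (ler_norm _)) ?ltrDl // => /(_ isT) aK.
exists a, (`|K0| + 1), e0^-1; split; first by rewrite invr_gt0.
split.
  move=> k; have := aK k I; rewrite /= normrM normrX (gtr0_norm e00) exprVn.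
  by rewrite ler_pdivlMr ?exprn_gt0.
by exists r; split => // e /andP[e0' er]; apply: af; rewrite er ltW.
Qed.

Lemma analytic_at0_of_analytic0 (f : R -> R) : analytic0 f -> analytic_at0 f.
Proof. by move=> [a [C [L [_ [_ [r [r0 af]]]]]]]; exists a, r. Qed.

End PowerSeries.

Section IrreducibleStochastic.
Variables (R : realType) (B : nat) (M : 'M[R]_B).
Hypotheses (Mnn : nonneg_mx M) (Mst : row_stochastic M).
Implicit Types (x : 'I_B -> R) (p : 'rV[R]_B).

Definition harmonic x := forall j, x j = \sum_i M j i * x i.

Lemma harmonic_max_succ x j0 j i : harmonic x -> (forall l, x l <= x j0) ->
  x j = x j0 -> 0 < M j i -> x i = x j0.
Proof.
move=> hx xmax xj Mji.
have sum0 : \sum_l M j l * (x j0 - x l) = 0.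
  under eq_bigr do rewrite mulrBr.
  by rewrite sumrB -mulr_suml Mst mul1r -hx xj subrr.
have nn l : true -> 0 <= M j l * (x j0 - x l) by rewrite mulr_ge0 ?subr_ge0.
have /eqP := @psumr_eq0P _ _ _ _ nn sum0 i isT.
by rewrite mulf_eq0 (gt_eqF Mji) subr_eq0 => /eqP.
Qed.

Lemma harmonic_max_mpow x j0 k j i : harmonic x -> (forall l, x l <= x j0) ->
  x j = x j0 -> 0 < mpow M k j i -> x i = x j0.
Proof.
move=> hx xmax; elim: k j => [|k IH] j xj.
  by rewrite /mpow /= mxE; case: eqP => [<-|] //; rewrite ltxx.
rewrite [mpow _ _]/= mxE => Mk_pos.
have [l Mjl_pos] : exists l, 0 < M j l * mpow M k l i.
  apply: contrapT => none; move: Mk_pos; rewrite ltNge => /negP; apply.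
  by apply: sumr_le0 => l _; rewrite leNgt; apply/negP => ?; apply: none; exists l.
have Mjl : 0 < M j l.
  by rewrite lt_neqAle Mnn andbT; apply: contraTneq Mjl_pos => <-; rewrite mul0r ltxx.
by apply: (IH l (harmonic_max_succ hx xmax xj Mjl)); rewrite -(pmulr_rgt0 _ Mjl).
Qed.

Hypothesis Mirr : irreducible_mx M.

Lemma harmonic_const x : (0 < B)%N -> harmonic x -> forall i j, x i = x j.
Proof.
move=> B0 hx; have [j0 _ xmax] := @arg_maxP _ _ _ (Ordinal B0) predT x isT.
suff xj0 i : x i = x j0 by move=> i j; rewrite !xj0.
by have [k Mk] := Mirr j0 i; apply: harmonic_max_mpow hx (fun l => xmax l isT) erefl Mk.
Qed.

(* [p] is stationary iff [p *m (1 - M) = 0] and its entries sum to [1]; adding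
   the all-ones matrix packs both conditions into one square system. *)
Definition stationary_system_mx : 'M[R]_B := 1%:M - M + const_mx 1.

Lemma stationary_system_mul p : stationary_dist M p -> p *m stationary_system_mx = const_mx 1.
Proof.
move=> [_ [p1 pM]]; rewrite mulmxDr mulmxBr mulmx1 pM subrr add0r.
by apply/rowP => k; rewrite !mxE; under eq_bigr do rewrite mxE mulr1.
Qed.

Lemma stationary_system_ker p (v : 'rV[R]_B) : stationary_dist M p ->
  v *m stationary_system_mx^T = 0 -> \sum_i v 0 i = 0 /\ harmonic (v 0).
Proof.
move=> [_ [p1 pM]] vQ; set x := v 0.
have eq_j j : x j - \sum_i M j i * x i + \sum_i x i = 0.
  transitivity ((v *m stationary_system_mx^T) 0 j); last by rewrite vQ mxE.
  rewrite mxE.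
  under [RHS]eq_bigr do rewrite !mxE mulrDr mulrBr mulr1.
  rewrite big_split sumrB /=; congr (_ - _ + _); last by apply: eq_bigr => i _; rewrite mulrC.
  rewrite (bigD1 j) //= eqxx mulr1 big1 ?addr0 // => i /negbTE.
  by rewrite eq_sym => ->; rewrite mulr0.
have pMx : \sum_j p 0 j * \sum_i M j i * x i = \sum_j p 0 j * x j.
  under eq_bigr do rewrite mulr_sumr.
  rewrite exchange_big /=; apply: eq_bigr => i _; rewrite -[in RHS]pM mxE mulr_suml.
  by apply: eq_bigr => j _; rewrite mulrA.
have sum0 : \sum_i x i = 0.
  have : \sum_j p 0 j * (x j - \sum_i M j i * x i + \sum_i x i) = 0.
    by rewrite big1 // => j _; rewrite eq_j mulr0.
  under eq_bigr do rewrite mulrDr mulrBr.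
  by rewrite big_split sumrB /= -mulr_suml p1 mul1r pMx subrr add0r.
split=> // j; have /eqP := eq_j j; rewrite sum0 addr0 subr_eq0 => /eqP //.
Qed.

Lemma det_stationary_system_neq0 p : (0 < B)%N -> stationary_dist M p ->
  \det stationary_system_mx != 0.
Proof.
move=> B0 pst; apply/negP; rewrite -det_tr => /det0P [v v0 vQ].
have [sum0 hv] := stationary_system_ker pst vQ.
have vc := harmonic_const B0 hv; set i0 := Ordinal B0.
have vi0 : v 0 i0 = 0.
  move: sum0; under eq_bigr do rewrite (vc _ i0).
  rewrite sumr_const card_ord -mulr_natr => /eqP.
  by rewrite mulf_eq0 pnatr_eq0 (negbTE (lt0n_neq0 B0)) orbF => /eqP.
by move: v0; apply/negP; rewrite negbK; apply/eqP/rowP => i; rewrite mxE (vc i i0).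
Qed.

Lemma stationary_dist_adj p j : stationary_dist M p ->
  \det stationary_system_mx * p 0 j = \sum_i \adj stationary_system_mx i j.
Proof.
move=> pst; have := congr1 (fun w : 'rV_B => (w *m \adj stationary_system_mx) 0 j)
  (stationary_system_mul pst).
rewrite /= -mulmxA mul_mx_adj mul_mx_scalar !mxE => ->.
by apply: eq_bigr => i _; rewrite mxE mul1r.
Qed.

End IrreducibleStochastic.

Section TupleSums.
Variables (V : nmodType) (T : finType).

Lemma sum_tuple_cons n (F : seq T -> V) :
  \sum_(t : n.+1.-tuple T) F t = \sum_(x : T) \sum_(t : n.-tuple T) F (x :: t).
Proof.
rewrite pair_big /=; pose cons_tuple (p : T * n.-tuple T) := [tuple of p.1 :: p.2].
rewrite (reindex cons_tuple) /=; last first.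
  exists (fun t : n.+1.-tuple T => (thead t, [tuple of behead t])) => [[x t]|t] _.
    by congr (_, _); apply: val_inj.
  by case/tupleP: t => x t; apply: val_inj.
by apply: eq_bigr => -[x t] _.
Qed.

Lemma sum_tuple0 (F : seq T -> V) : \sum_(t : 0.-tuple T) F t = F [::].
Proof.
by rewrite (big_pred1 [tuple]) // => t /=; apply/esym/eqP/val_inj; rewrite /= tuple0.
Qed.

End TupleSums.

Lemma sumr_restrict_le (R : numDomainType) (I : finType) (P : pred I) (F : I -> R) :
  (forall i, 0 <= F i) -> \sum_(i | P i) F i <= \sum_i F i.
Proof. by move=> F0; rewrite [leRHS](bigID P) /= lerDl sumr_ge0. Qed.

Section CylinderProbabilities.
Variables (R : realType) (B A : nat) (Phi : 'I_B -> 'I_A).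
Variables (p : 'rV[R]_B) (M : 'M[R]_B).

(* Probability that the chain started at [x] emits [w] in its next [size w] steps. *)
Definition cyl_prob_from (x : 'I_B) (w : seq 'I_A) : R :=
  \sum_(y : (size w).-tuple 'I_B | map Phi y == w) trans_prob M x y.

Lemma cyl_prob_from_nil x : cyl_prob_from x [::] = 1.
Proof.
rewrite /cyl_prob_from big_mkcond.
by rewrite (sum_tuple0 (fun s => if map Phi s == [::] then trans_prob M x s else 0)).
Qed.

Lemma cyl_prob_from_cons x a w :
  cyl_prob_from x (a :: w) = \sum_(y | Phi y == a) M x y * cyl_prob_from y w.
Proof.
rewrite /cyl_prob_from big_mkcond /=.
rewrite (sum_tuple_cons _ (fun s => if map Phi s == a :: w then trans_prob M x s else 0)).
rewrite [RHS]big_mkcond; apply: eq_bigr => y _ /=.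
under eq_bigr do rewrite eqseq_cons.
case: (Phi y == a) => /=; last by rewrite big1.
rewrite mulr_sumr [RHS]big_mkcond; apply: eq_bigr => t _.
by case: (map Phi t == w); rewrite ?mulr0.
Qed.

Lemma cyl_prob_nil : cyl_prob Phi p M [::] = 1.
Proof.
rewrite /cyl_prob big_mkcond.
by rewrite (sum_tuple0 (fun s => if map Phi s == [::] then path_prob p M s else 0)).
Qed.

Lemma cyl_prob_cons a w :
  cyl_prob Phi p M (a :: w) = \sum_(y | Phi y == a) p 0 y * cyl_prob_from y w.
Proof.
rewrite /cyl_prob big_mkcond /=.
rewrite (sum_tuple_cons _ (fun s => if map Phi s == a :: w then path_prob p M s else 0)).
rewrite [RHS]big_mkcond; apply: eq_bigr => y _ /=.
under eq_bigr do rewrite eqseq_cons.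
case: (Phi y == a) => /=; last by rewrite big1.
rewrite /cyl_prob_from mulr_sumr [RHS]big_mkcond; apply: eq_bigr => t _.
by case: (map Phi t == w); rewrite ?mulr0.
Qed.

Hypotheses (Mnn : nonneg_mx M) (Mst : row_stochastic M).
Hypotheses (p0 : forall j, 0 <= p 0 j) (p1 : \sum_(j < B) p 0 j = 1).

Lemma trans_prob_ge0 x ys : 0 <= trans_prob M x ys.
Proof. by elim: ys x => [|y ys IH] x //=; rewrite mulr_ge0. Qed.

Lemma path_prob_ge0 ys : 0 <= path_prob p M ys.
Proof. by case: ys => [|y ys] //=; rewrite mulr_ge0 ?trans_prob_ge0. Qed.

Lemma cyl_prob_ge0 w : 0 <= cyl_prob Phi p M w.
Proof. by rewrite sumr_ge0 // => t _; rewrite path_prob_ge0. Qed.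

Lemma joint_last_ge0 w b : 0 <= joint_last Phi p M w b.
Proof. by rewrite sumr_ge0 // => t _; rewrite path_prob_ge0. Qed.

Lemma joint_last_le_cyl_prob w b : joint_last Phi p M w b <= cyl_prob Phi p M w.
Proof.
rewrite /joint_last /cyl_prob [leRHS](bigID (fun y : (size w).-tuple _ => last b y == b)) /=.
by rewrite lerDl sumr_ge0 // => t _; rewrite path_prob_ge0.
Qed.

Lemma cyl_prob_from_rcons_le x w a : cyl_prob_from x (rcons w a) <= cyl_prob_from x w.
Proof.
elim: w x => [|b w IH] x /=.
  rewrite cyl_prob_from_cons cyl_prob_from_nil -(Mst x).
  by under eq_bigr do rewrite cyl_prob_from_nil mulr1; apply: sumr_restrict_le.
rewrite !cyl_prob_from_cons; apply: ler_sum => y _.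
by apply: ler_wpM2l; [apply: Mnn | apply: IH].
Qed.

Lemma cyl_prob_rcons_le w a : cyl_prob Phi p M (rcons w a) <= cyl_prob Phi p M w.
Proof.
case: w => [|b w] /=.
  rewrite cyl_prob_cons cyl_prob_nil -p1.
  by under eq_bigr do rewrite cyl_prob_from_nil mulr1; apply: sumr_restrict_le.
rewrite !cyl_prob_cons; apply: ler_sum => y _.
by apply: ler_wpM2l; [apply: p0 | apply: cyl_prob_from_rcons_le].
Qed.

End CylinderProbabilities.

Section AnalyticFamilies.
Variables (R : realType) (B A : nat) (Phi : 'I_B -> 'I_A).
Variables (pi : R -> 'rV[R]_B) (Delta : R -> 'M[R]_B).
Hypothesis DeltaA : forall i j, analytic0 (fun e => Delta e i j).

Lemma analytic0_stationary_dist : (0 < B)%N ->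
  near0 (fun e => nonneg_mx (Delta e) /\ row_stochastic (Delta e) /\
    irreducible_mx (Delta e) /\ stationary_dist (Delta e) (pi e)) ->
  forall j, analytic0 (fun e => pi e 0 j).
Proof.
move=> B0 chain j; set Q := fun e => stationary_system_mx (Delta e).
have QA i k : analytic0 (fun e => Q e i k).
  under eq_fun do rewrite !mxE.
  apply: analytic0_add (analytic0_cst _).
  by apply: analytic0_add (analytic0_cst _) (analytic0_opp (DeltaA i k)).
apply: (@analytic0_div _ (fun e => \sum_i \adj (Q e) i j) (fun e => \det (Q e)) _ 1).
- by apply: analytic0_sum => i; apply: analytic0_adj.
- exact: analytic0_det.
apply: near0_mono chain => e _ [Dnn [Dst [Dirr pst]]]; have [p0 [p1 _]] := pst.
split; first exact: det_stationary_system_neq0 B0 pst.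
split; last by rewrite mulrC stationary_dist_adj.
by rewrite ger0_norm // -p1 (bigD1 j) //= lerDl sumr_ge0.
Qed.

Hypothesis piA : forall j, analytic0 (fun e => pi e 0 j).

Lemma analytic0_trans_prob x ys : analytic0 (fun e => trans_prob (Delta e) x ys).
Proof.
elim: ys x => [|y ys IH] x /=; first exact: analytic0_cst.
exact: analytic0_mul.
Qed.

Lemma analytic0_path_prob ys : analytic0 (fun e => path_prob (pi e) (Delta e) ys).
Proof.
case: ys => [|y ys] /=; first exact: analytic0_cst.
exact: analytic0_mul (piA y) (analytic0_trans_prob y ys).
Qed.

Lemma analytic0_cyl_prob w : analytic0 (fun e => cyl_prob Phi (pi e) (Delta e) w).
Proof. by apply: analytic0_sum => t; apply: analytic0_path_prob. Qed.

Lemma analytic0_joint_last w b : analytic0 (fun e => joint_last Phi (pi e) (Delta e) w b).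
Proof. by apply: analytic0_sum => t; apply: analytic0_path_prob. Qed.

End AnalyticFamilies.

Lemma analytic0_ratio (R : realType) (f g : R -> R) : analytic0 f -> analytic0 g ->
  near0 (fun e => 0 < g e /\ 0 <= f e <= g e) -> analytic0 (fun e => f e / g e).
Proof.
move=> fA gA fg; apply: (analytic0_div (K := 1) fA gA).
apply: near0_mono fg => e _ [g0 /andP[f0 fg]]; rewrite divfK ?gt_eqF //; do !split=> //.
by rewrite ger0_norm ?divr_ge0 ?(ltW g0) // ler_pdivrMr // mul1r.
Qed.

Theorem proposition2p3 (R : realType) (B A : nat) (Phi : 'I_B -> 'I_A)
  (Delta : R -> 'M[R]_B) (pi : R -> 'rV[R]_B) :
  (0 < B)%N ->
  (forall i j : 'I_B, analytic_at0_closed (fun e => Delta e i j)) ->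
  (forall e : R, 0 <= e -> row_stochastic (Delta e)) ->
  (forall e : R, 0 < e -> nonneg_mx (Delta e) /\ irreducible_mx (Delta e)) ->
  (forall e : R, 0 < e -> stationary_dist (Delta e) (pi e)) ->
  forall (n : nat) (z : n.+1.-tuple 'I_A),
    analytic_at0 (fun e => cyl_prob Phi (pi e) (Delta e) (take n z))
    /\ (forall j : nat, (j < n)%N ->
          (exists d : R, 0 < d /\ forall e, 0 < e < d ->
             0 < cyl_prob Phi (pi e) (Delta e) (take j.+1 z)) ->
          forall b : 'I_B,
            analytic_at0 (fun e => cond_state Phi (pi e) (Delta e) (take j.+1 z) b))
    /\ ((exists d : R, 0 < d /\ forall e, 0 < e < d ->
             0 < cyl_prob Phi (pi e) (Delta e) (take n z)) ->
          analytic_at0 (fun e => cond_next Phi (pi e) (Delta e) (take n z)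
                                   (last (thead z) z))).
Proof.
move=> B0 DeltaC Dstoch Dirr pist n z.
have DeltaA i j := analytic0_of_closed (DeltaC i j).
have chain : near0 (fun e => nonneg_mx (Delta e) /\ row_stochastic (Delta e) /\
    irreducible_mx (Delta e) /\ stationary_dist (Delta e) (pi e)).
  exists 1; split=> // e /andP[e0 _]; have [Dnn Dirr_e] := Dirr e e0.
  by split=> //; split; [exact: Dstoch (ltW e0) | split=> //; exact: pist].
have piA := analytic0_stationary_dist DeltaA B0 chain.
have cylA := analytic0_cyl_prob Phi DeltaA piA.
have pos_chain w : near0 (fun e => 0 < cyl_prob Phi (pi e) (Delta e) w) ->
    near0 (fun e => 0 < cyl_prob Phi (pi e) (Delta e) w /\ nonneg_mx (Delta e) /\
      row_stochastic (Delta e) /\ stationary_dist (Delta e) (pi e)).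
  by move=> pos; apply: near0_mono (near0_and pos chain) => e _ [? [? [? [_ ?]]]].
split; first exact/analytic_at0_of_analytic0/cylA.
split=> [j _ pos b|pos]; apply/analytic_at0_of_analytic0/analytic0_ratio => //.
- exact: analytic0_joint_last.
- apply: near0_mono (pos_chain _ pos) => e _ [cyl_pos [Dnn [Dst [p0 [p1 _]]]]].
  by rewrite joint_last_ge0 ?joint_last_le_cyl_prob.
- apply: near0_mono (pos_chain _ pos) => e _ [cyl_pos [Dnn [Dst [p0 [p1 _]]]]].
  by rewrite cyl_prob_ge0 ?cyl_prob_rcons_le.
Qed.
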